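(* There is a constant $c>0$ depending only on $d$ and $a$ (independent of $\eta$, $k$, $m$, $L$, $\bar\mu_0$) such that: (1) for every unit box $\triangle=B_k(y)$, $y\in\Omega_k$, as operators on $\mathcal L^2(\triangle)$, $$-\Delta^\eta_\triangle+\bar\mu_k+a_kQ_{\triangle,k}^*Q_{\triangle,k}\ \ge\ c\,(-\Delta^\eta_\triangle+1);$$ (2) as operators on $\mathcal L^2(\Omega)$, $$-\Delta^\eta_\Omega+\bar\mu_k+a_kQ_{\Omega,k}^*Q_{\Omega,k}\ \ge\ c\,(-\Delta^\eta_\Omega+1).$$ In particular $G_k(\Omega)$ exists as a bounded operator.
   Context: Standing setup. Fix an integer $d\ge1$, an odd integer $L>1$, integers $k\ge1$, $m\ge k$, and set $\eta=L^{-k}$. Let $\Omega=\eta\{0,1,\dots,L^m-1\}^d\subset\eta\mathbb Z^d$ and, for $0\le j\le m$, $\Omega_j=(L^j\eta)\{0,1,\dots,L^{m-j}-1\}^d$. For a finite set $O$ contained in a lattice of spacing $\epsilon$, $\mathcal L^2(O)$ denotes complex functions on $O$ with $\langle f,g\rangle=\epsilon^d\sum_{x\in O}\overline{f(x)}g(x)$. For $y\in (L^j\eta)\mathbb Z^d$ let $B_j(y)=\{x\in\eta\mathbb Z^d:\ y_\mu\le x_\mu<y_\mu+L^j\eta,\ \mu=0,\dots,d-1\}$. For a set $O$ which is a union of boxes $B_j(y)$, the averaging operator $Q_{O,j}:\mathcal L^2(O)\to\mathcal L^2(\{y: B_j(y)\subset O\})$ is $(Q_{O,j}f)(y)=L^{-jd}\sum_{x\in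 B_j(y)}f(x)$, with adjoint $(Q_{O,j}^*h)(x)=h(y_x)$, $x\in B_j(y_x)$. For a box $O=\eta(\{u_0,\dots,u_0+N-1\}\times\cdots)$ the Neumann Laplacian is $(\Delta^\eta_O f)(x)=\eta^{-2}\sum_{\mu}\big(f(x+\eta e_\mu)-2f(x)+f(x-\eta e_\mu)\big)$, where any value $f(x\pm\eta e_\mu)$ with $x\pm\eta e_\mu\notin O$ is replaced by $f(x)$. Fix $a\in(0,1]$ and set $a_j=a\frac{1-L^{-2}}{1-L^{-2j}}$. Fix $\bar\mu_0\ge0$, $\bar\mu_j=L^{2j}\bar\mu_0$. $G_k(\Omega)=(-\Delta^\eta_\Omega+\bar\mu_k+a_kQ_{\Omega,k}^*Q_{\Omega,k})^{-1}$. Operator inequalities are in the sense of quadratic forms. *)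

From HB Require Import structures.
From mathcomp Require Import all_boot all_order all_algebra.
From mathcomp Require Import reals.
From mathcomp Require Import complex.
Set Implicit Arguments. Unset Strict Implicit. Unset Printing Implicit Defensive.
Import Order.TTheory GRing.Theory Num.Theory.
Local Open Scope ring_scope.

(* A cubic lattice box with N points per side, in index coordinates:
   the index i : cube d N corresponds to the lattice point  x = u + eps * i
   (u the corner of the box, eps the lattice spacing).  All operators below
   are translation invariant, so the corner u does not enter them. *)
Definition cube (d N : nat) := {ffun 'I_d -> 'I_N}.

Section Ops.
Local Unset Implicit Arguments.
Variables (R : realType) (d N : nat).
Local Notation C := R[i].
Local Notation fn := (cube d N -> C).

Definition shift (x : cube d N) (mu : 'I_d) (n : nat) : cube d N :=
  [ffun nu => if nu == mu then insubd (x mu) n else x nu].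

Definition ip (eps : R) (f g : fn) : C :=
  (eps ^+ d)%:C%C * \sum_(x : cube d N) Num.conj (f x) * g x.

(* Neumann Laplacian on the box: out-of-box values f(x +- eps e_mu) are
   replaced by f(x) (this is what [shift] does at the boundary). *)
Definition neuLap (eps : R) (f : fn) : fn := fun x =>
  (eps ^- 2)%:C%C *
  \sum_(mu < d) (f (shift x mu (x mu).+1) - 2%:R * f x + f (shift x mu (x mu).-1)).

(* Averaging over blocks of b^d points (b = L^j) : functions on the box
   -> functions on the set of blocks (indexed by cube d (N %/ b)); the block
   of index x is the Y with Y_mu = x_mu %/ b (we assume b divides N and the
   corner of the box is a multiple of the block side). *)
Definition inblock (b : nat) (Y : cube d (N %/ b)) (x : cube d N) : bool :=
  [forall mu, (x mu %/ b)%N == (Y mu : nat)].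

Definition Qav (b : nat) (f : fn) : cube d (N %/ b) -> C := fun Y =>
  ((b ^ d)%:R : C)^-1 * \sum_(x | inblock b Y x) f x.

(* adjoint: (Q^* h)(x) = h(y_x), y_x the (unique) block containing x *)
Definition Qadj (b : nat) (h : cube d (N %/ b) -> C) : fn := fun x =>
  \sum_(Y | inblock b Y x) h Y.

Definition Hop (eps mu a : R) (b : nat) (f : fn) : fn := fun x =>
  - neuLap eps f x + mu%:C%C * f x + a%:C%C * Qadj b (Qav b f) x.

Definition Lap1 (eps : R) (f : fn) : fn := fun x => - neuLap eps f x + f x.

Definition form_ge (eps : R) (A B : fn -> fn) : Prop :=
  forall f : fn, ip eps f (B f) <= ip eps f (A f).

End Ops.

Arguments shift {d N} x mu n.
Arguments ip {R d N} eps f g.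
Arguments neuLap {R d N} eps f x.
Arguments inblock {d N} b Y x.
Arguments Qav {R d N} b f Y.
Arguments Qadj {R d N} b h x.
Arguments Hop {R d N} eps mu a b f x.
Arguments Lap1 {R d N} eps f x.
Arguments form_ge {R d N} eps A B.

Definition etaL (R : realType) (L k : nat) : R := ((L%:R : R) ^+ k)^-1.
Definition a_j (R : realType) (a : R) (L j : nat) : R :=
  a * (1 - (L%:R : R) ^- 2) / (1 - (L%:R : R) ^- (2 * j)).
Definition mubar (R : realType) (mu0 : R) (L j : nat) : R :=
  (L%:R : R) ^+ (2 * j) * mu0.
Arguments etaL R L k : clear implicits.

From HB Require Import structures.
From mathcomp Require Import all_boot all_order all_algebra.
From mathcomp Require Import reals complex boolp.
From mathcomp Require Import ring lra.
Import Order.TTheory GRing.Theory Num.Theory.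
Local Open Scope ring_scope.

(* Let b = L^k be the number of lattice points per block side, so that the
   lattice spacing is eps = 1/b.  The single analytic input is the discrete
   Poincare inequality on a cube of side b (n = b^d points),
       n sum |g|^2 <= n d b^2 E(g) + |sum g|^2,       E = Dirichlet energy,
   obtained by joining two points by a lattice path changing one coordinate at
   a time, applying Cauchy-Schwarz along each line and averaging over pairs.
   Applied block by block on a box whose side is a multiple of b, it gives
       |f|^2 <= d eps^-2 E(f) + b^d |Q f|^2,
   since the block energies are part of the energy of f.  The quadratic forms
   of -Delta (Neumann) and of Q*Q are eps^-2 E(f) and b^d |Qf|^2, hence
       <f, (-Delta + mu + a' Q*Q) f> >= c <f, (-Delta + 1) f>
   whenever c (1 + d) <= 1 and c <= a'.  As a_k >= a/2, the constant
   c = a / (2 (1 + d)) works for all L, k, m, mu0; being coercive, the operator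
   is injective, hence invertible on the finite-dimensional space L^2(Omega). *)

Section RealSums.
Variable R : realFieldType.

Lemma sqr_sum_le_size (I : Type) (s : seq I) (u : I -> R) :
  (\sum_(i <- s) u i) ^+ 2 <= (size s)%:R * \sum_(i <- s) u i ^+ 2.
Proof.
elim: s => [|x s IH]; first by rewrite !big_nil expr0n /= mulr0.
rewrite !big_cons /= mulrSr.
set S := \sum_(i <- s) u i in IH *; set Q := \sum_(i <- s) u i ^+ 2 in IH *.
set n := (size s)%:R in IH *.
have Q0 : 0 <= Q by apply: sumr_ge0 => i _; exact: sqr_ge0.
have [n0|n_gt0] := eqVneq n 0.
  have S0 : S = 0.
    by apply/eqP; rewrite -sqrf_eq0 eq_le sqr_ge0 andbT -(mul0r Q) -n0.
  by rewrite S0 n0 addr0 add0r mul1r lerDl.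
have {}n_gt0 : 0 < n by rewrite lt_def n_gt0 ler0n.
(* n (n u_x^2 + Q - 2 u_x S) = (n u_x - S)^2 + (n Q - S^2) >= 0 by induction *)
have : 0 <= n * u x ^+ 2 + Q - 2 * u x * S.
  by rewrite -(pmulr_rge0 _ n_gt0); have := sqr_ge0 (n * u x - S); nra.
nra.
Qed.

Lemma sum_pair_sqr_diff (T : finType) (g : T -> R) :
  \sum_(r : T) \sum_(s : T) (g r - g s) ^+ 2 =
  2 * (#|T|%:R * \sum_(z : T) g z ^+ 2) - 2 * (\sum_(z : T) g z) ^+ 2.
Proof.
have sum_const (x : R) : \sum_(s : T) x = #|T|%:R * x.
  by rewrite sumr_const -[_ *+ #|_|]mulr_natl.
have expand r : \sum_(s : T) (g r - g s) ^+ 2 =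
    \sum_(s : T) g r ^+ 2 + \sum_(s : T) g s ^+ 2 - 2 * \sum_(s : T) g r * g s.
  by rewrite mulr_sumr -big_split -sumrB /=; apply: eq_bigr => s _; ring.
rewrite (eq_bigr _ (fun r _ => expand r)) sumrB big_split /=.
under eq_bigr do rewrite sum_const.
under [X in _ - X]eq_bigr do rewrite -mulr_sumr.
by rewrite sum_const -!mulr_sumr -mulr_suml expr2; ring.
Qed.

End RealSums.

Section Shift.
Variables (d N : nat).
Implicit Types x : cube d N.

Lemma shift_val x mu n : (shift x mu n mu : nat) = if (n < N)%N then n else x mu.
Proof. by rewrite /shift ffunE eqxx val_insubd. Qed.

Lemma shift_neq x mu n nu : nu != mu -> shift x mu n nu = x nu.
Proof. by rewrite /shift ffunE => /negbTE ->. Qed.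

Lemma shift_out x mu n : (N <= n)%N -> shift x mu n = x.
Proof.
move=> Nn; apply/ffunP => nu; rewrite /shift ffunE; case: eqP => // ->.
by apply: val_inj; rewrite val_insubd ltnNge Nn.
Qed.

Lemma shift_id x mu : shift x mu (x mu) = x.
Proof.
apply/ffunP => nu; rewrite /shift ffunE; case: eqP => // ->.
by apply: val_inj; rewrite val_insubd ltn_ord.
Qed.

Lemma shift_shift x mu n m : (m < N)%N -> shift (shift x mu n) mu m = shift x mu m.
Proof.
move=> mN; apply/ffunP => nu; rewrite /shift !ffunE; case: eqP => // _.
by apply: val_inj; rewrite !val_insubd mN.
Qed.

End Shift.
Section Poincare.
Variables (R : realFieldType) (d b : nat).
Local Notation cb := (cube d b).
Implicit Types (g : cb -> R) (z : cb).

(* Squared forward difference of g in direction j at z (zero on the upper face),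
   and the Dirichlet energy of g on the cube of side b. *)
Definition grad2 g (j : 'I_d) z := (g (shift z j (z j).+1) - g z) ^+ 2.
Definition dirichlet g := \sum_z \sum_(j < d) grad2 g j z.

Lemma grad2_ge0 g j z : 0 <= grad2 g j z.
Proof. exact: sqr_ge0. Qed.

Lemma dirichlet_ge0 g : 0 <= dirichlet g.
Proof. by apply: sumr_ge0 => z _; apply: sumr_ge0 => j _; exact: grad2_ge0. Qed.

Lemma line_bound g z (j : 'I_d) (t : nat) : (t < b)%N ->
  (g z - g (shift z j t)) ^+ 2 <= b%:R * \sum_(v < b) grad2 g j (shift z j v).
Proof.
move=> tb; pose phi v := g (shift z j v).
suff chord p q : (p <= q < b)%N ->
    (phi q - phi p) ^+ 2 <= b%:R * \sum_(v < b) grad2 g j (shift z j v).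
  have -> : g z = phi (z j) by rewrite /phi shift_id.
  case: (leqP (z j) t) => h; last by apply: chord; rewrite (ltnW h) ltn_ord.
  by rewrite -sqrrN opprB; apply: chord; rewrite h tb.
case/andP=> pq qb.
have steps : \sum_(p <= v < q) (phi v.+1 - phi v) ^+ 2
             = \sum_(p <= v < q) grad2 g j (shift z j v).
  rewrite big_nat_cond [RHS]big_nat_cond; apply: eq_bigr => v /andP[/andP[_ vq] _].
  have vb : (v < b)%N by apply: leq_trans vq (ltnW qb).
  rewrite /grad2 shift_val vb shift_shift //; exact: leq_ltn_trans vq qb.
have sub_line : \sum_(p <= v < q) grad2 g j (shift z j v)
                <= \sum_(v < b) grad2 g j (shift z j v).
  rewrite -(big_mkord xpredT (fun v => grad2 g j (shift z j v))).
  rewrite (@big_cat_nat _ _ _ p 0 b) //=; last exact: leq_trans pq (ltnW qb).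
  rewrite (@big_cat_nat _ _ _ q p b) //=; last exact: ltnW.
  rewrite addrCA lerDl addr_ge0 //; apply: sumr_ge0 => i _; exact: grad2_ge0.
rewrite -telescope_sumr //; apply: le_trans; first exact: sqr_sum_le_size.
rewrite size_iota steps; apply: ler_pM; rewrite ?ler0n //.
  by apply: sumr_ge0 => i _; exact: grad2_ge0.
by rewrite ler_nat; apply: leq_trans (leq_subr _ _) (ltnW qb).
Qed.

Definition swap_coord (j : 'I_d) (u v : 'I_b) z : cb :=
  [ffun nu => if nu == j then (if z j == u then v else if z j == v then u else z j)
              else z nu].

Lemma swap_coordK j u v : involutive (swap_coord j u v).
Proof.
move=> z; apply/ffunP => nu; rewrite /swap_coord !ffunE eqxx.
case: eqP => [->|//].
case: (eqVneq (z j) u) => [->|zu]; first by rewrite eqxx; case: eqVneq.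
case: (eqVneq (z j) v) => [->|zv]; first by rewrite eqxx.
by rewrite (negbTE zu) (negbTE zv).
Qed.

Lemma sum_shift_line (F : cb -> R) (j : 'I_d) (v : 'I_b) :
  \sum_z F (shift z j v) = b%:R * \sum_(z : cb | z j == v) F z.
Proof.
have split_by_height z :
    F (shift z j v) = \sum_(u < b) (if z j == u then F (shift z j v) else 0).
  by rewrite -big_mkcond (big_pred1 (z j)) // => u; rewrite /= eq_sym.
rewrite (eq_bigr _ (fun z _ => split_by_height z)) exchange_big /=.
under eq_bigr do rewrite -big_mkcond /=.
have slice u : \sum_(z : cb | z j == u) F (shift z j v) = \sum_(z : cb | z j == v) F z.
  rewrite (reindex_inj (inv_inj (swap_coordK j u v))) /=.
  have height z : (swap_coord j u v z j == u) = (z j == v).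
    rewrite /swap_coord ffunE eqxx.
    case: (eqVneq (z j) u) => [->|zu]; first by rewrite eq_sym.
    case: (eqVneq (z j) v) => [_|zv]; first by rewrite eqxx.
    by rewrite (negbTE zu).
  rewrite (eq_bigl _ _ height); apply: eq_bigr => z /eqP zv.
  have -> : shift (swap_coord j u v z) j v = shift z j v.
    apply/ffunP => nu; rewrite /shift /swap_coord !ffunE; case: eqP => // _.
    by apply: val_inj; rewrite !val_insubd ltn_ord.
  by rewrite -zv shift_id.
by rewrite (eq_bigr _ (fun u _ => slice u)) sumr_const card_ord mulr_natl.
Qed.

(* [mix j s r] takes its first j coordinates from s and the others from r:
   mix 0 .. mix d is a path from r to s changing one coordinate at a time. *)
Definition mix (j : nat) (s r : cb) : cb :=
  [ffun mu : 'I_d => if (mu < j)%N then s mu else r mu].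

Lemma mix0 s r : mix 0 s r = r.
Proof. by apply/ffunP => mu; rewrite ffunE. Qed.

Lemma mixd s r : mix d s r = s.
Proof. by apply/ffunP => mu; rewrite ffunE ltn_ord. Qed.

Lemma mixS (j : 'I_d) s r : mix j.+1 s r = shift (mix j s r) j (mix j r s j).
Proof.
apply/ffunP => mu; rewrite /shift /mix !ffunE ltnn.
case: (eqVneq mu j) => [->|muj].
  by apply: val_inj; rewrite val_insubd ltn_ord ltnSn.
by rewrite ltnS leq_eqVlt (negbTE (muj : (mu:nat) != j)).
Qed.

Lemma mix_swapK (j : nat) :
  involutive (fun p : cb * cb => (mix j p.2 p.1, mix j p.1 p.2)).
Proof.
by move=> [r s] /=; congr pair; apply/ffunP => mu; rewrite !ffunE; case: (mu < j)%N.
Qed.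

(* Step j of the path from r to s, summed over all pairs (r, s), is bounded by
   the energy in direction j: the map (r, s) |-> (mix j s r, mix j r s) is a
   bijection and the step then runs along one line of the first point. *)
Lemma sum_pair_step (j : 'I_d) g :
  \sum_(r : cb) \sum_(s : cb) (g (mix j s r) - g (mix j.+1 s r)) ^+ 2 <=
  #|{: cb}|%:R * b%:R * b%:R * \sum_z grad2 g j z.
Proof.
pose K (p : cb * cb) := (g p.1 - g (shift p.1 j (p.2 j))) ^+ 2.
have -> : \sum_(r : cb) \sum_(s : cb) (g (mix j s r) - g (mix j.+1 s r)) ^+ 2
    = \sum_(r : cb) \sum_(s : cb) K (mix j s r, mix j r s).
  by apply: eq_bigr => r _; apply: eq_bigr => s _; rewrite /K /= mixS.
rewrite (pair_big xpredT xpredT (fun r s => K (mix j s r, mix j r s))) /=.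
rewrite -(reindex_inj (inv_inj (mix_swapK j)) (P:=xpredT) (F:=K)).
rewrite -(pair_big xpredT xpredT (fun z w => K (z, w))) /=.
apply: (@le_trans _ _
  (\sum_(z : cb) \sum_(w : cb) (b%:R * \sum_(v < b) grad2 g j (shift z j v)))).
  by apply: ler_sum => z _; apply: ler_sum => w _; apply: line_bound.
rewrite (eq_bigr (fun z : cb =>
    #|{: cb}|%:R * (b%:R * \sum_(v < b) grad2 g j (shift z j v)))); last first.
  by move=> z _; rewrite sumr_const -[_ *+ #|_|]mulr_natl.
rewrite -mulr_sumr -mulr_sumr exchange_big /=.
under eq_bigr do rewrite sum_shift_line.
rewrite -mulr_sumr !mulrA [in leRHS](partition_big (fun z : cb => z j) xpredT) //=.
Qed.

Lemma sum_pair_sqr_diff_le g :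
  \sum_(r : cb) \sum_(s : cb) (g r - g s) ^+ 2
    <= d%:R * (#|{: cb}|%:R * b%:R * b%:R) * dirichlet g.
Proof.
have path_bound r s : (g r - g s) ^+ 2 <=
    d%:R * \sum_(j < d) (g (mix j s r) - g (mix j.+1 s r)) ^+ 2.
  have -> : g r - g s = \sum_(j < d) (g (mix j s r) - g (mix j.+1 s r)).
    rewrite -(big_mkord xpredT (fun j => g (mix j s r) - g (mix j.+1 s r))).
    have := @telescope_sumr _ 0 d (fun k => - g (mix k s r)) (leq0n d).
    rewrite mix0 mixd opprK addrC => <-.
    by apply: eq_bigr => i _; rewrite opprK addrC.
  apply: le_trans; first exact: sqr_sum_le_size.
  by rewrite /index_enum -enumT size_enum_ord.
apply: (@le_trans _ _ (\sum_(r : cb) \sum_(s : cb)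
    d%:R * \sum_(j < d) (g (mix j s r) - g (mix j.+1 s r)) ^+ 2)).
  by apply: ler_sum => r _; apply: ler_sum => s _; exact: path_bound.
under eq_bigr do rewrite -mulr_sumr.
rewrite -mulr_sumr -mulrA ler_wpM2l ?ler0n //.
under eq_bigr do rewrite exchange_big /=.
rewrite exchange_big /= /dirichlet [in leRHS]exchange_big /= mulr_sumr.
by apply: ler_sum => j _; exact: sum_pair_step.
Qed.

Lemma poincare g :
  #|{: cb}|%:R * \sum_z g z ^+ 2 <=
  #|{: cb}|%:R * (d%:R * b%:R * b%:R * dirichlet g) + (\sum_z g z) ^+ 2.
Proof.
have := sum_pair_sqr_diff_le g; rewrite sum_pair_sqr_diff -!mulrA.
have : 0 <= d%:R * (b%:R * (b%:R * dirichlet g)) :> R.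
  by rewrite !mulr_ge0 ?ler0n ?dirichlet_ge0.
set A := _ * dirichlet g; set n := #|{: cb}|%:R.
have : 0 <= n by rewrite ler0n.
nra.
Qed.

End Poincare.
Arguments dirichlet {R d b} g.
Arguments grad2 {R d b} g j z.
Arguments dirichlet_ge0 {R d b} g.
Arguments poincare {R d b} g.
Section Blocks.
Variables (d N b : nat).
Hypotheses (b_gt0 : (0 < b)%N) (b_dvd_N : (b %| N)%N).
Local Notation M := (N %/ b)%N.

(* A box of side N = M b is the disjoint union of M^d blocks of side b: the
   point with block index Y and position r inside the block is Y b + r. *)
Lemma block_pt_lt (Y : cube d M) (r : cube d b) mu : (Y mu * b + r mu < N)%N.
Proof.
move: (ltn_ord (Y mu)) (ltn_ord (r mu)).
move: (nat_of_ord (Y mu)) (nat_of_ord (r mu)) => y z y_lt z_lt.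
rewrite -(divnK b_dvd_N); apply: (@leq_trans (y.+1 * b)).
  by rewrite mulSnr ltn_add2l.
by rewrite leq_mul2r y_lt orbT.
Qed.

Definition block_pt (Y : cube d M) (r : cube d b) : cube d N :=
  [ffun mu => Ordinal (block_pt_lt Y r mu)].

Lemma block_pt_val (Y : cube d M) (r : cube d b) mu :
  (block_pt Y r mu : nat) = (Y mu * b + r mu)%N.
Proof. by rewrite ffunE. Qed.

Lemma block_pt_div (Y : cube d M) (r : cube d b) mu :
  ((Y mu * b + r mu) %/ b)%N = Y mu.
Proof.
move: (ltn_ord (r mu)); move: (nat_of_ord (r mu)) (nat_of_ord (Y mu)) => z y z_lt.
by rewrite divnMDl // divn_small ?addn0.
Qed.

Lemma block_index_lt (x : cube d N) mu : (x mu %/ b < M)%N.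
Proof. by rewrite ltn_divLR // divnK. Qed.

Lemma block_pt_bij : bijective (fun p : cube d M * cube d b => block_pt p.1 p.2).
Proof.
exists (fun x => ([ffun mu => Ordinal (block_index_lt x mu)],
                  [ffun mu => Ordinal (ltn_pmod (x mu) b_gt0)])).
  move=> [Y r] /=; congr pair; apply/ffunP => mu; apply: val_inj.
    by rewrite ffunE /= block_pt_val block_pt_div.
  by rewrite ffunE /= block_pt_val modnMDl modn_small.
by move=> x; apply/ffunP => mu; apply: val_inj; rewrite /= block_pt_val !ffunE /= -divn_eq.
Qed.

Lemma sum_blocks (V : zmodType) (F : cube d N -> V) :
  \sum_(x : cube d N) F x = \sum_(Y : cube d M) \sum_(r : cube d b) F (block_pt Y r).
Proof.
rewrite pair_big /= (reindex (fun p : cube d M * cube d b => block_pt p.1 p.2)) //.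
exact/onW_bij/block_pt_bij.
Qed.

Lemma inblock_block_pt (Y Y' : cube d M) (r : cube d b) :
  inblock b Y (block_pt Y' r) = (Y' == Y).
Proof.
apply/forallP/eqP => [H|->]; last by move=> mu; rewrite block_pt_val block_pt_div.
apply/ffunP => mu; apply: val_inj.
by move/eqP: (H mu); rewrite block_pt_val block_pt_div.
Qed.

Lemma sum_inblock (V : zmodType) (F : cube d N -> V) (Y : cube d M) :
  \sum_(x : cube d N | inblock b Y x) F x = \sum_(r : cube d b) F (block_pt Y r).
Proof.
rewrite big_mkcond sum_blocks /=.
under eq_bigr do under eq_bigr do rewrite inblock_block_pt.
rewrite (bigD1 Y) //= [X in _ + X]big1 ?addr0.
  by apply: eq_bigr => r _; rewrite eqxx.
by move=> Y' /negbTE nY; apply: big1 => r _; rewrite nY.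
Qed.

(* Every edge inside a block is an edge of the box, so the block energies add
   up to at most the energy on the whole box. *)
Lemma dirichlet_blocks (R : realFieldType) (h : cube d N -> R) :
  \sum_(Y : cube d M) dirichlet (h \o block_pt Y) <= dirichlet h.
Proof.
rewrite [dirichlet h]/dirichlet sum_blocks; apply: ler_sum => Y _.
apply: ler_sum => r _; apply: ler_sum => j _; rewrite /grad2 /=.
case: (ltnP (r j).+1 b) => hb; last first.
  by rewrite shift_out // subrr expr0n /= sqr_ge0.
have -> // : shift (block_pt Y r) j (block_pt Y r j).+1 = block_pt Y (shift r j (r j).+1).
apply/ffunP => nu; apply: val_inj; rewrite /= block_pt_val.
case: (eqVneq nu j) => [->|nj]; last by rewrite shift_neq // !block_pt_val shift_neq.
have in_box : ((Y j * b + r j).+1 < N)%N.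
  by have := block_pt_lt Y (shift r j (r j).+1) j; rewrite shift_val hb addnS.
by rewrite shift_val !block_pt_val in_box shift_val hb addnS.
Qed.

End Blocks.
Arguments block_pt {d N b} b_dvd_N Y r.
Arguments sum_blocks {d N b} b_gt0 b_dvd_N {V} F.
Arguments sum_inblock {d N b} b_gt0 b_dvd_N {V} F Y.
Arguments dirichlet_blocks {d N b} b_gt0 b_dvd_N {R} h.
Section ComplexSquares.
Variable R : rcfType.
Local Notation C := R[i].

Definition abs2 (z : C) : R := complex.Re z ^+ 2 + complex.Im z ^+ 2.

Lemma abs2_ge0 z : 0 <= abs2 z.
Proof. by rewrite addr_ge0 ?sqr_ge0. Qed.

Lemma abs2_eq0 z : abs2 z = 0 -> z = 0.
Proof.
case: z => x y; rewrite /abs2 /= => /eqP; rewrite paddr_eq0 ?sqr_ge0 // !sqrf_eq0.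
by case/andP => /eqP -> /eqP ->.
Qed.

Lemma conj_mul_abs2 (z : C) : Num.conj z * z = (abs2 z)%:C%C.
Proof. by rewrite -normCKC -add_Re2_Im2. Qed.

Lemma Re_sum (I : finType) (P : pred I) (F : I -> C) :
  complex.Re (\sum_(i | P i) F i) = \sum_(i | P i) complex.Re (F i).
Proof. exact: (raddf_sum (@complex.Re R : Rcomplex R -> R)). Qed.

Lemma Im_sum (I : finType) (P : pred I) (F : I -> C) :
  complex.Im (\sum_(i | P i) F i) = \sum_(i | P i) complex.Im (F i).
Proof. exact: (raddf_sum (@complex.Im R : Rcomplex R -> R)). Qed.

Lemma ReMr (x : R) (z : C) : complex.Re (x%:C%C * z) = x * complex.Re z.
Proof. by case: z => u v /=; rewrite !mul0r subr0. Qed.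

Lemma ImMr (x : R) (z : C) : complex.Im (x%:C%C * z) = x * complex.Im z.
Proof. by case: z => u v /=; rewrite !mul0r addr0. Qed.

Lemma natrC n : (n%:R : C) = (n%:R : R)%:C%C.
Proof. by rewrite rmorph_nat. Qed.

End ComplexSquares.
Arguments abs2 {R} z.

Section LaplaceForm.
Variables (R : realType) (d N : nat).
Local Notation C := R[i].
Local Notation cN := (cube d N).

Definition energy (f : cN -> C) : R :=
  dirichlet (fun x => complex.Re (f x)) + dirichlet (fun x => complex.Im (f x)).

Lemma energy_ge0 f : 0 <= energy f.
Proof. by rewrite addr_ge0 ?dirichlet_ge0. Qed.

(* Cyclic successor in the coordinate mu: a bijection of the box used to
   re-index the backward differences as forward ones. *)
Definition cyc_succ (mu : 'I_d) (x : cN) : cN :=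
  [ffun nu => if nu == mu then ordS (x mu) else x nu].

Lemma cyc_succ_inj mu : injective (cyc_succ mu).
Proof.
move=> x y /ffunP H; apply/ffunP => nu; have := H nu; rewrite !ffunE.
by case: eqP => [->|//]; exact: ordS_inj.
Qed.

Lemma sum_by_parts (f : cN -> C) (mu : 'I_d) :
  \sum_(x : cN) Num.conj (f x) * (f (shift x mu (x mu).-1) - f x) =
  \sum_(x : cN) Num.conj (f (shift x mu (x mu).+1)) * (f x - f (shift x mu (x mu).+1)).
Proof.
rewrite (reindex_inj (cyc_succ_inj mu)) /=; apply: eq_bigr => y _.
case: (ltnP (y mu).+1 N) => hy.
  have E : cyc_succ mu y = shift y mu (y mu).+1.
    apply/ffunP => nu; rewrite /cyc_succ /shift !ffunE; case: eqP => // _.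
    by apply: val_inj; rewrite val_insubd hy /= modn_small.
  by rewrite E shift_val hy /= shift_shift ?ltn_ord // shift_id.
rewrite (@shift_out _ _ y) //.
have E2 : nat_of_ord (cyc_succ mu y mu) = 0%N.
  rewrite /cyc_succ ffunE eqxx /=.
  have -> : (y mu).+1 = N by apply/eqP; rewrite eqn_leq hy ltn_ord.
  exact: modnn.
by rewrite E2 /= -E2 shift_id !subrr !mulr0.
Qed.

Lemma laplace_form (eps : R) (f : cN -> C) :
  \sum_(x : cN) Num.conj (f x) * neuLap eps f x = - ((eps ^- 2) * energy f)%:C%C.
Proof.
have dir_form mu : \sum_(x : cN) Num.conj (f x) *
     (f (shift x mu (x mu).+1) - 2%:R * f x + f (shift x mu (x mu).-1)) =
  - (\sum_(x : cN) abs2 (f (shift x mu (x mu).+1) - f x))%:C%C.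
  transitivity (\sum_(x : cN) Num.conj (f x) * (f (shift x mu (x mu).+1) - f x) +
                \sum_(x : cN) Num.conj (f x) * (f (shift x mu (x mu).-1) - f x)).
    by rewrite -big_split /=; apply: eq_bigr => x _; ring.
  rewrite sum_by_parts -big_split /= rmorph_sum -sumrN; apply: eq_bigr => x _.
  set D := f (shift x mu (x mu).+1) - f x.
  transitivity (- (Num.conj D * D)); last by rewrite conj_mul_abs2.
  rewrite /D rmorphB /=; ring.
rewrite /neuLap; under eq_bigr do rewrite mulrCA mulr_sumr.
rewrite -mulr_sumr exchange_big /=; under eq_bigr do rewrite dir_form.
rewrite sumrN -rmorph_sum mulrN rmorphM /=; congr (- (_ * _%:C%C)).
rewrite /energy /dirichlet -big_split /= exchange_big /=; apply: eq_bigr => x _.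
rewrite -big_split /=; apply: eq_bigr => j _.
by rewrite /grad2 /abs2 (raddfB (@complex.Re R : Rcomplex R -> R))
  (raddfB (@complex.Im R : Rcomplex R -> R)).
Qed.

Lemma norm2_form (f : cN -> C) :
  \sum_(x : cN) Num.conj (f x) * f x = (\sum_(x : cN) abs2 (f x))%:C%C.
Proof. by rewrite rmorph_sum; apply: eq_bigr => x _; rewrite conj_mul_abs2. Qed.

End LaplaceForm.
Arguments energy {R d N} f.
Arguments energy_ge0 {R d N} f.

Section AveragingForm.
Variables (R : realType) (d N b : nat).
Hypotheses (b_gt0 : (0 < b)%N) (b_dvd_N : (b %| N)%N).
Local Notation C := R[i].
Local Notation cN := (cube d N).
Local Notation M := (N %/ b)%N.

Lemma sum_inblock_Qav (f : cN -> C) (Y : cube d M) :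
  \sum_(x : cN | inblock b Y x) f x = (b ^ d)%:R * Qav b f Y.
Proof. by rewrite /Qav mulrA mulfV ?mul1r // pnatr_eq0 -lt0n expn_gt0 b_gt0. Qed.

Lemma average_form (f : cN -> C) :
  \sum_(x : cN) Num.conj (f x) * Qadj b (Qav b f) x =
  ((b ^ d)%:R * \sum_(Y : cube d M) abs2 (Qav b f Y))%:C%C.
Proof.
rewrite /Qadj; under eq_bigr do rewrite mulr_sumr big_mkcond.
rewrite exchange_big /=.
under eq_bigr do rewrite -big_mkcond -mulr_suml -rmorph_sum sum_inblock_Qav
  rmorphM /= conjC_nat -mulrA conj_mul_abs2.
by rewrite -mulr_sumr rmorphM /= -rmorph_sum natrC.
Qed.

Lemma block_poincare (f : cN -> C) (Y : cube d M) :
  \sum_(r : cube d b) abs2 (f (block_pt b_dvd_N Y r)) <=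
  d%:R * b%:R * b%:R * energy (f \o block_pt b_dvd_N Y) + (b ^ d)%:R * abs2 (Qav b f Y).
Proof.
set g := f \o block_pt b_dvd_N Y.
have card_cube : #|{: cube d b}| = (b ^ d)%N by rewrite card_ffun !card_ord.
have PRe := poincare (fun r => complex.Re (g r)).
have PIm := poincare (fun r => complex.Im (g r)).
rewrite card_cube /= in PRe PIm.
have mean : (\sum_r complex.Re (g r)) ^+ 2 + (\sum_r complex.Im (g r)) ^+ 2 =
            (b ^ d)%:R ^+ 2 * abs2 (Qav b f Y).
  rewrite -Re_sum -Im_sum -(sum_inblock b_gt0) sum_inblock_Qav natrC ReMr ImMr.
  by rewrite /abs2; ring.
have n_gt0 : 0 < ((b ^ d)%:R : R) by rewrite ltr0n expn_gt0 b_gt0.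
rewrite -(ler_pM2l n_gt0) /energy /abs2 big_split /=.
move: PRe PIm mean; rewrite /g /=; set n := ((b ^ d)%:R : R).
rewrite !mulrDr; nra.
Qed.

Lemma box_poincare (f : cN -> C) :
  \sum_(x : cN) abs2 (f x) <=
  d%:R * b%:R * b%:R * energy f + (b ^ d)%:R * \sum_(Y : cube d M) abs2 (Qav b f Y).
Proof.
rewrite (sum_blocks b_gt0 b_dvd_N); apply: le_trans.
  by apply: ler_sum => Y _; exact: block_poincare.
rewrite big_split /= -!mulr_sumr lerD2r ler_wpM2l ?mulr_ge0 ?ler0n //.
rewrite big_split /= /energy; apply: lerD; exact: (dirichlet_blocks b_gt0).
Qed.

End AveragingForm.
Arguments average_form {R d N b} b_gt0 f.
Arguments box_poincare {R d N b} b_gt0 b_dvd_N f.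
Section Coercivity.
Variables (R : realType) (d N b : nat).
Hypotheses (b_gt0 : (0 < b)%N) (b_dvd_N : (b %| N)%N).
Local Notation C := R[i].
Local Notation cN := (cube d N).
Local Notation M := (N %/ b)%N.

Lemma Hop_form (eps mu a' : R) (f : cN -> C) :
  ip eps f (Hop eps mu a' b f) =
  (eps ^+ d * (eps ^- 2 * energy f + mu * \sum_(x : cN) abs2 (f x) +
               a' * ((b ^ d)%:R * \sum_(Y : cube d M) abs2 (Qav b f Y))))%:C%C.
Proof.
rewrite /ip /Hop rmorphM /=; congr (_ * _).
transitivity (- \sum_(x : cN) Num.conj (f x) * neuLap eps f x
              + mu%:C%C * \sum_(x : cN) Num.conj (f x) * f x
              + a'%:C%C * \sum_(x : cN) Num.conj (f x) * Qadj b (Qav b f) x).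
  by rewrite !mulr_sumr -sumrN -!big_split /=; apply: eq_bigr => x _; ring.
by rewrite laplace_form norm2_form (average_form b_gt0) opprK !rmorphD !rmorphM.
Qed.

Lemma Lap1_form (eps c : R) (f : cN -> C) :
  ip eps f (fun x => c%:C%C * Lap1 eps f x) =
  (eps ^+ d * (c * (eps ^- 2 * energy f + \sum_(x : cN) abs2 (f x))))%:C%C.
Proof.
rewrite /ip /Lap1 rmorphM /=; congr (_ * _).
transitivity (c%:C%C * (- \sum_(x : cN) Num.conj (f x) * neuLap eps f x
                        + \sum_(x : cN) Num.conj (f x) * f x)).
  by rewrite -sumrN -big_split /= mulr_sumr; apply: eq_bigr => x _; ring.
by rewrite laplace_form norm2_form opprK [RHS]rmorphM /= [in RHS]rmorphD.
Qed.

(* Coercivity at lattice spacing eps = 1/b: by the box Poincare inequality,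
   |f|^2 <= d eps^-2 E(f) + b^d |Qf|^2, which is absorbed by the Laplacian and
   the averaging term as soon as c (1 + d) <= 1 and c <= a'. *)
Lemma Hop_coercive (eps mu a' c : R) :
  0 < eps -> eps * b%:R = 1 -> 0 <= mu -> 0 <= c -> c * (1 + d%:R) <= 1 -> c <= a' ->
  form_ge eps (Hop eps mu a' b) (fun (f : cN -> C) x => c%:C%C * Lap1 eps f x).
Proof.
move=> eps_gt0 eps_b mu_ge0 c_ge0 c_d c_a f.
rewrite Hop_form Lap1_form lecR; apply: ler_wpM2l; first by rewrite exprn_ge0 ?ltW.
have eps_b2 : eps ^- 2 = b%:R * b%:R.
  have b_inv : b%:R = eps^-1 by apply: (mulfI (lt0r_neq0 eps_gt0)); rewrite eps_b mulfV ?lt0r_neq0.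
  by rewrite -exprVn -b_inv expr2.
have := box_poincare b_gt0 b_dvd_N f; rewrite eps_b2.
have := energy_ge0 f; have := abs2_ge0.
set E := energy f; set S := \sum_(x : cN) abs2 (f x).
set Q := \sum_(Y : cube d M) abs2 (Qav b f Y); set n := ((b ^ d)%:R : R).
set bb := b%:R * b%:R => _ E_ge0 Poinc.
have S_ge0 : 0 <= S by apply: sumr_ge0 => x _; exact: abs2_ge0.
have Q_ge0 : 0 <= Q by apply: sumr_ge0 => Y _; exact: abs2_ge0.
have nQ_ge0 : 0 <= n * Q by rewrite mulr_ge0 ?ler0n.
have bbE_ge0 : 0 <= bb * E by rewrite mulr_ge0 ?mulr_ge0 ?ler0n.
have {}Poinc : S <= d%:R * (bb * E) + n * Q by move: Poinc; rewrite /bb !mulrA.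
have : c * (bb * E) * (1 + d%:R) <= bb * E.
  by rewrite mulrAC ler_piMl // mulr_ge0.
have : c * (n * Q) <= a' * (n * Q) by rewrite ler_wpM2r.
have : 0 <= mu * S by rewrite mulr_ge0.
have : c * S <= c * (d%:R * (bb * E) + n * Q) by rewrite ler_wpM2l.
nra.
Qed.

End Coercivity.

Lemma coercive_injective (R : realType) (d N : nat) (eps c : R)
    (H : (cube d N -> R[i]) -> cube d N -> R[i]) :
  0 < eps -> 0 < c -> form_ge eps H (fun f x => c%:C%C * Lap1 eps f x) ->
  forall f, (forall x, H f x = 0) -> forall x, f x = 0.
Proof.
move=> eps_gt0 c_gt0 Hge f Hf0 x.
have := Hge f; rewrite Lap1_form (funext Hf0).
have -> : ip eps f (fun=> 0) = 0%:C%C by rewrite /ip big1 ?mulr0 // => y _; rewrite mulr0.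
rewrite lecR pmulr_rle0 ?exprn_gt0 // pmulr_rle0 // => H_le0.
have S_eq0 : \sum_(y : cube d N) abs2 (f y) = 0.
  apply/eqP; rewrite eq_le sumr_ge0 ?andbT => [|y _]; last exact: abs2_ge0.
  apply: le_trans H_le0; rewrite lerDr mulr_ge0 ?energy_ge0 //.
  by rewrite invr_ge0 exprn_ge0 ?ltW.
apply: abs2_eq0; move/eqP: S_eq0; rewrite psumr_eq0 => [/allP|y _]; last exact: abs2_ge0.
by move/(_ x (mem_index_enum _))/eqP.
Qed.

Section FiniteDimInverse.
Variables (F : fieldType) (T : finType).
Local Notation n := #|T|.

Definition to_row (u : T -> F) : 'rV[F]_n := \row_i u (enum_val i).
Definition of_row (v : 'rV[F]_n) : T -> F := fun x => v 0 (enum_rank x).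

Lemma to_rowK u : of_row (to_row u) = u.
Proof. by apply: funext => x; rewrite /of_row /to_row mxE enum_rankK. Qed.

(* A linear injective map on F^T is invertible (rank-nullity via matrices). *)
Lemma linear_inj_invertible (h : (T -> F) -> (T -> F)) :
  (forall a u v x, h (fun y => a * u y + v y) x = a * h u x + h v x) ->
  (forall u, (forall x, h u x = 0) -> forall x, u x = 0) ->
  exists G, forall f, h (G f) = f /\ G (h f) = f.
Proof.
move=> h_lin h_inj; pose hm v := to_row (h (of_row v)).
have hmZD a u v : hm (a *: u + v) = a *: hm u + hm v.
  apply/rowP => i; rewrite /hm /to_row !mxE.
  have -> : of_row (a *: u + v) = (fun y => a * of_row u y + of_row v y).
    by apply: funext => y; rewrite /of_row !mxE.
  exact: h_lin.
have hm_additive : {morph hm : u v / u + v} by move=> u v; have := hmZD 1 u v; rewrite !scale1r.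
have hm0 : hm 0 = 0 by apply: (addrI (hm 0)); rewrite -hm_additive !addr0.
pose A := \matrix_(i, j) hm (delta_mx 0 i) 0 j.
have hmA v : v *m A = hm v.
  rewrite {2}(row_sum_delta v) (big_morph hm hm_additive hm0).
  apply/rowP => j; rewrite !mxE summxE; apply: eq_bigr => i _.
  by rewrite mxE -[v 0 i *: _]addr0 hmZD hm0 addr0 !mxE.
have A_unit : A \in unitmx.
  rewrite -row_free_unit; apply: inj_row_free => v; rewrite hmA => hv0.
  have hv x : h (of_row v) x = 0.
    have := congr1 (fun w : 'rV_n => w 0 (enum_rank x)) hv0.
    by rewrite /hm /to_row !mxE enum_rankK.
  by apply/rowP => i; rewrite mxE -(h_inj _ hv (enum_val i)) /of_row enum_valK.
exists (fun f => of_row (to_row f *m invmx A)) => f; split.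
  by rewrite -[LHS]to_rowK -/(hm _) -hmA mulmxKV // to_rowK.
have -> : to_row (h f) = to_row f *m A by rewrite hmA /hm to_rowK.
by rewrite mulmxK // to_rowK.
Qed.

End FiniteDimInverse.

Lemma Hop_linear (R : realType) (d N : nat) (eps mu a' : R) (b : nat) (a : R[i])
    (u v : cube d N -> R[i]) x :
  Hop eps mu a' b (fun y => a * u y + v y) x = a * Hop eps mu a' b u x + Hop eps mu a' b v x.
Proof.
have lap_lin : neuLap eps (fun y => a * u y + v y) x = a * neuLap eps u x + neuLap eps v x.
  rewrite /neuLap mulrCA -mulrDr; congr (_ * _).
  by rewrite mulr_sumr -big_split /=; apply: eq_bigr => nu _; ring.
have av_lin : Qav b (fun y => a * u y + v y) = (fun Y => a * Qav b u Y + Qav b v Y).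
  by apply: funext => Y; rewrite /Qav big_split /= -mulr_sumr; ring.
rewrite /Hop lap_lin av_lin /Qadj big_split /= -mulr_sumr; ring.
Qed.

Lemma a_j_ge_half (R : realType) (a : R) (L k : nat) :
  0 < a -> (1 < L)%N -> (1 <= k)%N -> a / 2 <= a_j a L k.
Proof.
move=> a_gt0 L_gt1 k_ge1; rewrite /a_j.
set l := (L%:R : R); set p := l ^- 2; set q := l ^- (2 * k).
have l_ge2 : 2 <= l by rewrite /l (ler_nat R 2 L).
have l4 : 4 <= l ^+ 2 by rewrite expr2; nra.
have pl : p * l ^+ 2 = 1 by rewrite /p mulVf // gt_eqF // exprn_gt0 //; lra.
have lq : 1 < l ^+ (2 * k) by rewrite exprn_egt1 ?muln_eq0 -?lt0n ?k_ge1 //; lra.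
have ql : q * l ^+ (2 * k) = 1 by rewrite /q mulVf // gt_eqF //; lra.
have q_gt0 : 0 < q by rewrite /q invr_gt0; lra.
have p_gt0 : 0 < p by rewrite /p invr_gt0 exprn_gt0 //; lra.
have q_lt1 : q < 1 by nra.
have p_le : p <= 1 / 4 by nra.
rewrite ler_pdivlMr; [nra | lra].
Qed.

Definition coer_const (R : realType) (d : nat) (a : R) : R := a / (2 * (1 + d%:R)).
Arguments coer_const {R} d a.

Lemma coer_const_gt0 (R : realType) (d : nat) (a : R) : 0 < a -> 0 < coer_const d a.
Proof. by move=> a_gt0; rewrite divr_gt0 // mulr_gt0 // ltr_pwDl ?ler0n. Qed.

Lemma coercive_at_scale (R : realType) (d : nat) (a mu0 : R) (L k N : nat) :
  0 < a -> a <= 1 -> 0 <= mu0 -> (1 < L)%N -> (1 <= k)%N -> (L ^ k %| N)%N ->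
  form_ge (N := N) (etaL R L k) (Hop (etaL R L k) (mubar mu0 L k) (a_j a L k) (L ^ k))
    (fun (f : cube d N -> R[i]) x => (coer_const d a)%:C%C * Lap1 (etaL R L k) f x).
Proof.
move=> a_gt0 a_le1 mu0_ge0 L_gt1 k_ge1 dvd_N.
have L_gt0 : (0 < L)%N by apply: ltn_trans L_gt1.
have Lk_gt0 : 0 < (L%:R : R) ^+ k by rewrite exprn_gt0 // ltr0n.
have d_ge0 : 0 <= d%:R :> R by rewrite ler0n.
have den_gt0 : 0 < 2 * (1 + d%:R) :> R by lra.
apply: Hop_coercive; rewrite ?expn_gt0 ?L_gt0 //.
- by rewrite /etaL invr_gt0.
- by rewrite /etaL natrX mulVf ?gt_eqF.
- by rewrite /mubar mulr_ge0 ?exprn_ge0 ?ler0n.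
- exact/ltW/coer_const_gt0.
- by rewrite /coer_const mulrAC ler_pdivrMr // mul1r; nra.
- apply: (le_trans _ (@a_j_ge_half R a L k a_gt0 L_gt1 k_ge1)).
  by rewrite /coer_const ler_pM2l // lef_pV2 ?posrE //; lra.
Qed.
Theorem mainTheorem2 (R : realType) (d : nat) (a : R) :
  (1 <= d)%N -> 0 < a -> a <= 1 ->
  exists c : R, 0 < c /\
  forall (L k m : nat) (mu0 : R),
    odd L -> (1 < L)%N -> (1 <= k)%N -> (k <= m)%N -> 0 <= mu0 ->
    (forall y : cube d (L ^ (m - k)),
       form_ge (N := L ^ k) (etaL R L k)
         (Hop (etaL R L k) (mubar mu0 L k) (a_j a L k) (L ^ k))
         (fun (f : cube d (L ^ k) -> R[i]) x => (c%:C)%C * Lap1 (etaL R L k) f x))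
    /\
    form_ge (etaL R L k)
      (Hop (N := L ^ m) (etaL R L k) (mubar mu0 L k) (a_j a L k) (L ^ k))
      (fun (f : cube d (L ^ m) -> R[i]) x => (c%:C)%C * Lap1 (etaL R L k) f x)
    /\
    exists G : (cube d (L ^ m) -> R[i]) -> (cube d (L ^ m) -> R[i]),
      forall f : cube d (L ^ m) -> R[i],
        Hop (etaL R L k) (mubar mu0 L k) (a_j a L k) (L ^ k) (G f) = f /\
        G (Hop (etaL R L k) (mubar mu0 L k) (a_j a L k) (L ^ k) f) = f.
Proof.
move=> _ a_gt0 a_le1; exists (coer_const d a); split; first exact: coer_const_gt0.
move=> L k m mu0 _ L_gt1 k_ge1 k_le_m mu0_ge0.
have omega_coercive := @coercive_at_scale R d a mu0 L k (L ^ m)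
  a_gt0 a_le1 mu0_ge0 L_gt1 k_ge1 (dvdn_exp2l L k_le_m).
split; first by move=> _; exact: coercive_at_scale (dvdnn _).
split; first exact: omega_coercive.
apply: linear_inj_invertible; first exact: Hop_linear.
apply: coercive_injective omega_coercive.
  by rewrite /etaL invr_gt0 exprn_gt0 // ltr0n (ltn_trans _ L_gt1).
exact: coer_const_gt0.
Qed.
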